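(* Let $A\subseteq B$ be an admissible extension (under the standing assumptions below). Then for every $\psi\in\mathrm{Min}(A)$ there exists $\mu\in\mathrm{Min}(B)$ such that $\mu\cap\nabla_A=\psi$.
   Context: For an algebra $M$ of a fixed signature: $\mathrm{Con}(M)$ is its congruence lattice with bottom $\Delta_M$ and top $\nabla_M=M^2$. $[\cdot,\cdot]_M$ is the term condition commutator: for $\alpha,\beta,\mu\in\mathrm{Con}(M)$, $C(\alpha,\beta;\mu)$ means that for all $n,k$, every $(n+k)$-ary term $t$, all $(a_i,b_i)\in\alpha$ and $(c_j,d_j)\in\beta$: $(t(\bar a,\bar c),t(\bar a,\bar d))\in\mu$ iff $(t(\bar b,\bar c),t(\bar b,\bar d))\in\mu$; $[\alpha,\beta]_M=\bigcap\{\mu: C(\alpha,\beta;\mu)\}$. A congruence $\phi\neq\nabla_M$ is prime if $[\alpha,\beta]_M\subseteq\phi$ implies $\alpha\subseteq\phi$ or $\beta\subseteq\phi$; $\mathrm{Spec}(M)$ is the set of primes, $\mathrm{Min}(M)$ its minimal elements; $\rho_M(\theta)$ is the intersection of all primes containing $\theta$ ($\nabla_M$ if none); $M$ is semiprime if $\rho_M(\Delta_M)=\Delta_M$. Standing assumptions: $B$ is an algebra, $A$ is a subalgebra of $B$, $A$ and $B$ are semiprime, and the commutators of $A$ and $B$ are commutative and distributive w.r.t. arbitrary joins (i.e. $[\alpha,\beta]=[\beta,\alpha]$ and $[\bigvee_i\alpha_i,\beta]=\bigvee_i[\alpha_i,\beta]$). The extension $A\subseteq B$ is admissible iff $\phi\cap\nabla_A\in\mathrm{Spec}(A)$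 for all $\phi\in\mathrm{Spec}(B)$. *)

From mathcomp Require Import all_boot.
Set Implicit Arguments. Unset Strict Implicit. Unset Printing Implicit Defensive.

Record signature := Signature { op : Type; arity : op -> nat }.

Record algebra (S : signature) := Algebra {
  carrier :> Type;
  interp : forall o : op S, ('I_(arity o) -> carrier) -> carrier }.

Inductive term (S : signature) (X : Type) : Type :=
  | Var : X -> term S X
  | App : forall o : op S, ('I_(arity o) -> term S X) -> term S X.

Fixpoint eval (S : signature) (M : algebra S) (X : Type) (v : X -> M)
    (t : term S X) : M :=
  match t with
  | Var x => v x
  | App o f => @interp S M o (fun i => eval v (f i))
  end.

Definition rel_on (T : Type) := T -> T -> Prop.
Definition rsub (T : Type) (a b : rel_on T) := forall x y, a x y -> b x y.
Definition req (T : Type) (a b : rel_on T) := forall x y, a x y <-> b x y.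

Definition is_cong (S : signature) (M : algebra S) (th : rel_on M) : Prop :=
  [/\ (forall x, th x x),
      (forall x y, th x y -> th y x),
      (forall x y z, th x y -> th y z -> th x z) &
      (forall (o : op S) (a b : 'I_(arity o) -> M),
          (forall i, th (a i) (b i)) -> th (@interp S M o a) (@interp S M o b))].

Definition Delta (T : Type) : rel_on T := fun x y => x = y.
Definition Nabla (T : Type) : rel_on T := fun _ _ => True.

Definition TC (S : signature) (M : algebra S) (al be mu : rel_on M) : Prop :=
  forall (n k : nat) (t : term S ('I_n + 'I_k)%type)
         (a b : 'I_n -> M) (c d : 'I_k -> M),
    (forall i, al (a i) (b i)) -> (forall j, be (c j) (d j)) ->
    (mu (eval (fun z => match z with inl i => a i | inr j => c j end) t)
        (eval (fun z => match z with inl i => a i | inr j => d j end) t)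
     <->
     mu (eval (fun z => match z with inl i => b i | inr j => c j end) t)
        (eval (fun z => match z with inl i => b i | inr j => d j end) t)).

Definition comm (S : signature) (M : algebra S) (al be : rel_on M) : rel_on M :=
  fun x y => forall mu : rel_on M, @is_cong S M mu -> @TC S M al be mu -> mu x y.

Definition cjoin (S : signature) (M : algebra S) (I : Type) (F : I -> rel_on M)
  : rel_on M :=
  fun x y => forall th : rel_on M, @is_cong S M th -> (forall i, rsub (F i) th) -> th x y.

Definition is_prime (S : signature) (M : algebra S) (phi : rel_on M) : Prop :=
  [/\ is_cong phi,
      ~ req phi (@Nabla M) &
      forall al be : rel_on M, @is_cong S M al -> @is_cong S M be ->
        rsub (@comm S M al be) phi -> rsub al phi \/ rsub be phi].

Definition is_min_prime (S : signature) (M : algebra S) (phi : rel_on M) : Prop :=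
  @is_prime S M phi /\
  (forall psi : rel_on M, @is_prime S M psi -> rsub psi phi -> req psi phi).

Definition rho (S : signature) (M : algebra S) (th : rel_on M) : rel_on M :=
  fun x y => forall phi : rel_on M, @is_prime S M phi -> rsub th phi -> phi x y.

Definition semiprime (S : signature) (M : algebra S) : Prop :=
  req (@rho S M (@Delta M)) (@Delta M).

Definition comm_commutative (S : signature) (M : algebra S) : Prop :=
  forall al be : rel_on M, @is_cong S M al -> @is_cong S M be ->
    req (@comm S M al be) (@comm S M be al).

Definition comm_join_distributive (S : signature) (M : algebra S) : Prop :=
  forall (I : Type) (F : I -> rel_on M) (be : rel_on M),
    (forall i, @is_cong S M (F i)) -> @is_cong S M be ->
    req (@comm S M (@cjoin S M I F) be) (@cjoin S M I (fun i => @comm S M (F i) be)).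

Definition op_closed (S : signature) (B : algebra S) (P : B -> Prop) : Prop :=
  forall (o : op S) (a : 'I_(arity o) -> B),
    (forall i, P (a i)) -> P (@interp S B o a).

Definition subalg (S : signature) (B : algebra S) (P : B -> Prop)
  (HP : op_closed P) : algebra S :=
  @Algebra S {x : B | P x}
    (fun o a => exist P (@interp S B o (fun i => proj1_sig (a i)))
                       (HP o _ (fun i => proj2_sig (a i)))).

(** phi ∩ ∇_A, as a relation on A. *)
Definition restr (S : signature) (B : algebra S) (P : B -> Prop)
  (HP : op_closed P) (phi : rel_on B) : rel_on (subalg HP) :=
  fun x y => phi (proj1_sig x) (proj1_sig y).

Definition admissible (S : signature) (B : algebra S) (P : B -> Prop)
  (HP : op_closed P) : Prop :=
  forall phi : rel_on B, @is_prime S B phi -> @is_prime S (subalg HP) (@restr S B P HP phi).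

From mathcomp Require Import all_boot.
From mathcomp Require Import boolp.
From mathcomp Require classical_sets.

(* The proof has two
   Zorn steps joined by an algebraic argument.
   1. Among the congruences θ of B with θ ∩ ∇_A ⊆ ψ there is a maximal one:
      unions of chains of congruences are congruences because operations are
      finitary.
   2. Such a maximal θ is prime in B: if [α,β] ⊆ θ, then distributivity and
      commutativity of the commutator of B give [θ∨α, θ∨β] ⊆ θ; restricting
      to A and using that ψ is prime, (θ∨α) ∩ ∇_A ⊆ ψ or (θ∨β) ∩ ∇_A ⊆ ψ,
      and maximality yields α ⊆ θ or β ⊆ θ.
   3. Every prime of any algebra contains a minimal prime, since the meet of
      a chain of primes is prime.  Take μ ∈ Min(B) with μ ⊆ θ.
   Admissibility makes μ ∩ ∇_A a prime of A below θ ∩ ∇_A ⊆ ψ, so minimality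
   of ψ forces μ ∩ ∇_A = ψ. *)

Lemma zorn_preorder (T : Type) (le : T -> T -> Prop) (Q : T -> Prop) (q0 : T) :
  Q q0 -> (forall a, le a a) -> (forall a b c, le a b -> le b c -> le a c) ->
  (forall C : T -> Prop, (forall s, C s -> Q s) -> (exists s, C s) ->
     (forall s t, C s -> C t -> le s t \/ le t s) ->
     exists u, Q u /\ forall s, C s -> le s u) ->
  exists m, Q m /\ forall s, Q s -> le m s -> le s m.
Proof.
move=> Qq0 le_refl le_trans chain_ub.
pose R (a b : {x | Q x}) := `[< le (sval a) (sval b) >].
have [[m Qm] m_max] : exists m, classical_sets.premaximal R m.
  apply: (classical_sets.ZL_preorder (exist _ q0 Qq0)).
  - by move=> a; apply/asboolP.
  - by move=> a b c /asboolP ab /asboolP bc; apply/asboolP; exact: le_trans ab bc.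
  move=> A A_total.
  have [[a Aa]|A0] := pselect (exists a, A a); last first.
    by exists (exist _ q0 Qq0) => a Aa; case: A0; exists a.
  pose C x := exists a, A a /\ sval a = x.
  have C_Q s : C s -> Q s by move=> [b [_ <-]]; exact: svalP b.
  have C_chain s t : C s -> C t -> le s t \/ le t s.
    move=> [b [Ab <-]] [c [Ac <-]].
    by case: (A_total b c Ab Ac) => /asboolP; [left|right].
  have C_ne : exists s, C s by exists (sval a), a.
  have [u [Qu ub]] := chain_ub C C_Q C_ne C_chain.
  by exists (exist _ u Qu) => b Ab; apply/asboolP; apply: ub; exists b.
exists m; split=> // s Qs ms.
by have /asboolP := m_max (exist _ s Qs) (asboolT ms).
Qed.

Section Congruences.
Context {S : signature} {M : algebra S}.
Implicit Types (th al be : rel_on M) (C : rel_on M -> Prop).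

Lemma cong_refl {th} : is_cong th -> forall x, th x x.
Proof. by case. Qed.

Lemma cong_sym {th} : is_cong th -> forall x y, th x y -> th y x.
Proof. by case. Qed.

Lemma cong_trans {th} : is_cong th -> forall x y z, th x y -> th y z -> th x z.
Proof. by case. Qed.

Lemma cong_app {th} : is_cong th -> forall (o : op S) (a b : 'I_(arity o) -> M),
  (forall i, th (a i) (b i)) -> th (interp a) (interp b).
Proof. by case. Qed.

Lemma eval_cong th (X : Type) (v w : X -> M) (t : term S X) :
  is_cong th -> (forall z, th (v z) (w z)) -> th (eval v t) (eval w t).
Proof.
move=> th_cong vw; elim: t => [x|o f IH] /=; first exact: vw.
exact: cong_app.
Qed.

Definition chain_of C := forall s t, C s -> C t -> rsub s t \/ rsub t s.

(* Finitely many members of a nonempty chain have a common upper bound in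
   the chain; this is where finitary arities enter. *)
Lemma chain_bound {C s0} : C s0 -> chain_of C ->
  forall n (g : 'I_n -> rel_on M), (forall i, C (g i)) ->
  exists s, C s /\ forall i, rsub (g i) s.
Proof.
move=> Cs0 C_chain n g Cg.
suff /(_ n) [s [Cs gs]] : forall m, exists s, C s /\ forall i : 'I_n, i < m -> rsub (g i) s.
  by exists s; split=> // i; apply: gs.
elim=> [|m [s [Cs gs]]]; first by exists s0.
have [lt_mn|le_nm] := ltnP m n; last first.
  by exists s; split=> // i lt_im; apply: gs; exact: leq_trans (ltn_ord i) le_nm.
pose gm := g (Ordinal lt_mn).
have [s_gm|gm_s] := C_chain s gm Cs (Cg _).
- exists gm; split=> [|i]; first exact: Cg.
  rewrite ltnS leq_eqVlt => /predU1P [eq_im|lt_im].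
  + by have -> : i = Ordinal lt_mn by exact: val_inj.
  + by move=> x y /(gs i lt_im) /s_gm.
- exists s; split=> // i; rewrite ltnS leq_eqVlt => /predU1P [eq_im|lt_im].
  + by have -> : i = Ordinal lt_mn by exact: val_inj.
  + exact: gs.
Qed.

Definition chain_union C : rel_on M := fun x y => exists2 s, C s & s x y.

Lemma chain_union_cong {C s0} : C s0 -> (forall s, C s -> is_cong s) ->
  chain_of C -> is_cong (chain_union C).
Proof.
move=> Cs0 C_cong C_chain; split.
- by move=> x; exists s0 => //; exact: cong_refl (C_cong _ Cs0) x.
- by move=> x y [s Cs sxy]; exists s => //; exact: cong_sym (C_cong _ Cs) _ _ sxy.
- move=> x y z [s Cs sxy] [t Ct tyz].
  have [st|ts] := C_chain s t Cs Ct; [exists t | exists s] => //.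
  + exact: cong_trans (C_cong _ Ct) _ _ _ (st _ _ sxy) tyz.
  + exact: cong_trans (C_cong _ Cs) _ _ _ sxy (ts _ _ tyz).
- move=> o a b ab.
  have /choice [g gP] : forall i, exists s, C s /\ s (a i) (b i).
    by move=> i; case: (ab i) => s; exists s.
  have [s [Cs gs]] := chain_bound Cs0 C_chain _ g (fun i => (gP i).1).
  exists s => //; apply: (cong_app (C_cong _ Cs)) => i; apply: gs; exact: (gP i).2.
Qed.

Definition meet C : rel_on M := fun x y => forall s, C s -> s x y.

Lemma meet_cong C : (forall s, C s -> is_cong s) -> is_cong (meet C).
Proof.
move=> C_cong; split.
- by move=> x s Cs; exact: cong_refl (C_cong _ Cs) x.
- by move=> x y xy s Cs; exact: cong_sym (C_cong _ Cs) _ _ (xy s Cs).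
- by move=> x y z xy yz s Cs; exact: cong_trans (C_cong _ Cs) _ _ _ (xy s Cs) (yz s Cs).
- by move=> o a b ab s Cs; apply: (cong_app (C_cong _ Cs)) => i; exact: ab.
Qed.

Lemma chain_meet_prime {C s0} : C s0 -> (forall s, C s -> is_prime s) ->
  chain_of C -> is_prime (meet C).
Proof.
move=> Cs0 C_prime C_chain.
have escape al : ~ rsub al (meet C) -> exists s, C s /\ ~ rsub al s.
  move=> al_out; apply: contrapT => none; apply: al_out => x y alxy s Cs.
  by apply: contrapT => nsxy; apply: none; exists s; split=> // al_s; apply/nsxy/al_s.
split.
- by apply: meet_cong => s /C_prime [].
- case: (C_prime s0 Cs0) => _ s0N _ meetN; apply: s0N => x y.
  by split=> // _; exact: (proj2 (meetN x y) I s0 Cs0).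
move=> al be al_cong be_cong comm_meet.
have comm_in s : C s -> rsub (comm al be) s by move=> Cs x y /comm_meet; apply.
apply: contrapT => /not_orP [/escape [s1 [Cs1 al_s1]] /escape [s2 [Cs2 be_s2]]].
have [s12|s21] := C_chain s1 s2 Cs1 Cs2.
- case: (C_prime s1 Cs1) => _ _ /(_ al be al_cong be_cong (comm_in s1 Cs1)) [] //.
  by move=> be_s1; apply: be_s2 => x y /be_s1 /s12.
- case: (C_prime s2 Cs2) => _ _ /(_ al be al_cong be_cong (comm_in s2 Cs2)) [] //.
  by move=> al_s2; apply: al_s1 => x y /al_s2 /s21.
Qed.

Lemma min_prime_below {th} : is_prime th -> exists mu, is_min_prime mu /\ rsub mu th.
Proof.
move=> th_prime.
have [|mu [[mu_prime mu_th] mu_min]] :=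
  @zorn_preorder _ (fun a b => rsub b a) (fun m => is_prime m /\ rsub m th) th
    (conj th_prime (fun _ _ h => h)) (fun _ _ _ h => h)
    (fun _ _ _ ab bc _ _ h => ab _ _ (bc _ _ h)).
  move=> C CQ [s0 Cs0] C_chain; exists (meet C); split; last by move=> s Cs x y; apply.
  split; last by move=> x y /(_ s0 Cs0); apply: (CQ s0 Cs0).2.
  apply: (chain_meet_prime Cs0) => [s /CQ []//|s t Cs Ct].
  by case: (C_chain s t Cs Ct); [right|left].
exists mu; split=> //; split=> // s s_prime s_mu x y; split; first exact: s_mu.
by apply: (mu_min s) => //; split=> // u v /s_mu /mu_th.
Qed.

Lemma cjoin_cong {I : Type} (F : I -> rel_on M) : is_cong (cjoin F).
Proof.
split.
- by move=> x th th_cong _; exact: cong_refl.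
- by move=> x y xy th th_cong F_th; exact: cong_sym th_cong _ _ (xy th th_cong F_th).
- move=> x y z xy yz th th_cong F_th.
  exact: cong_trans th_cong _ _ _ (xy th th_cong F_th) (yz th th_cong F_th).
- move=> o a b ab th th_cong F_th; apply: (cong_app th_cong) => i; exact: ab.
Qed.

Lemma cjoin_ub {I : Type} (F : I -> rel_on M) i : rsub (F i) (cjoin F).
Proof. by move=> x y Fxy th _ F_th; exact: F_th i x y Fxy. Qed.

Lemma cjoin_least {I : Type} (F : I -> rel_on M) th :
  is_cong th -> (forall i, rsub (F i) th) -> rsub (cjoin F) th.
Proof. by move=> th_cong F_th x y; apply. Qed.

(* [α, β] ⊆ β, since C(α, β; β) holds trivially. *)
Lemma comm_sub_r al be : is_cong be -> rsub (comm al be) be.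
Proof.
move=> be_cong x y; apply=> // n k t a b c d _ cd.
by split=> _; apply: eval_cong => // -[i|j] //=; exact: cong_refl.
Qed.

Lemma comm_sub_l al be : comm_commutative M -> is_cong al -> is_cong be ->
  rsub (comm al be) al.
Proof.
by move=> commC al_cong be_cong x y /(commC _ _ al_cong be_cong); exact: comm_sub_r.
Qed.

Definition join2 th al : rel_on M := cjoin (fun b : bool => if b then th else al).

Lemma comm_join2_sub {th al be} :
  comm_commutative M -> comm_join_distributive M ->
  is_cong th -> is_cong al -> is_cong be -> rsub (comm al be) th ->
  rsub (comm (join2 th al) (join2 th be)) th.
Proof.
move=> commC commD th_cong al_cong be_cong al_be_th.
have thal_cong : forall b : bool, is_cong (if b then th else al) by case.
have thbe_cong : forall b : bool, is_cong (if b then th else be) by case.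
have join_be_cong := cjoin_cong (fun b : bool => if b then th else be).
move=> x y /(commD _ _ _ thal_cong join_be_cong x y).
apply: cjoin_least => // -[]; first exact: comm_sub_l.
move=> u v /(commC _ _ al_cong join_be_cong u v) /(commD _ _ _ thbe_cong al_cong u v).
apply: cjoin_least => // -[]; first exact: comm_sub_l.
by move=> p q /(commC _ _ be_cong al_cong p q) /al_be_th.
Qed.

End Congruences.

Section Restriction.
Context {S : signature} {B : algebra S} {P : B -> Prop} {HP : op_closed P}.
Local Notation restrA := (@restr S B P HP).

Lemma val_eval (X : Type) (v : X -> subalg HP) (t : term S X) :
  sval (eval v t) = eval (fun z => sval (v z)) t.
Proof. by elim: t => [x|o f IH] //=; congr interp; apply: funext => i; exact: IH. Qed.

Lemma restr_cong {th : rel_on B} : is_cong th -> is_cong (restrA th).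
Proof.
move=> th_cong; split.
- by move=> x; exact: cong_refl th_cong (sval x).
- by move=> x y; exact: cong_sym th_cong (sval x) (sval y).
- by move=> x y z; exact: cong_trans th_cong (sval x) (sval y) (sval z).
- by move=> o a b; exact: cong_app th_cong o (fun i => sval (a i)) (fun i => sval (b i)).
Qed.

(* The commutator of restrictions lies in the restriction of the commutator:
   the term condition for μ on B restricts to the term condition for μ ∩ ∇_A. *)
Lemma comm_restr (al be : rel_on B) :
  rsub (comm (restrA al) (restrA be)) (restrA (comm al be)).
Proof.
move=> x y xy mu mu_cong TCmu; apply: (xy (restrA mu)); first exact: restr_cong.
move=> n k t a b c d ab cd; rewrite /restr !val_eval.
have val_case (a' : 'I_n -> subalg HP) (c' : 'I_k -> subalg HP) :
  (fun z : 'I_n + 'I_k => sval (match z with inl i => a' i | inr j => c' j end))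
  = (fun z => match z with inl i => sval (a' i) | inr j => sval (c' j) end).
  by apply: funext => -[].
by rewrite !val_case; apply: TCmu.
Qed.

End Restriction.

Section MaximalBelow.
Context {S : signature} {B : algebra S} {P : B -> Prop} {HP : op_closed P}.
Local Notation restrA := (@restr S B P HP).
Context {psi : rel_on (subalg HP)}.
Hypothesis psi_prime : is_prime psi.

Definition below_psi (th : rel_on B) : Prop := is_cong th /\ rsub (restrA th) psi.

Definition maximal_below_psi (th : rel_on B) : Prop :=
  below_psi th /\ forall s, below_psi s -> rsub th s -> rsub s th.

Lemma exists_maximal_below_psi : exists th, maximal_below_psi th.
Proof.
have psi_cong : is_cong psi by case: psi_prime.
have Delta_below : below_psi (@Delta B).
  split; first by rewrite /Delta; split=> [x|x y ->|x y z -> ->|o a b /funext ->].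
  by move=> [x px] [y py] xy; rewrite (eq_exist px py xy); exact: cong_refl psi_cong _.
have [|th [th_below th_max]] :=
  @zorn_preorder _ (@rsub B) below_psi _ Delta_below (fun _ _ _ h => h)
    (fun _ _ _ ab bc _ _ h => bc _ _ (ab _ _ h)).
  move=> C CQ [s0 Cs0] C_chain; exists (chain_union C); split.
  + split; first by apply: (chain_union_cong Cs0) => // s /CQ [].
    by move=> [x px] [y py] [s Cs sxy]; exact: (CQ s Cs).2 (exist _ x px) (exist _ y py) sxy.
  + by move=> s Cs x y sxy; exists s.
by exists th.
Qed.

Hypotheses (commC : comm_commutative B) (commD : comm_join_distributive B).

Lemma maximal_below_psi_prime {th} : maximal_below_psi th -> is_prime th.
Proof.
move=> [[th_cong th_psi] th_max].
have [_ psiN psi_pr] := psi_prime.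
split=> //.
  by move=> thN; apply: psiN => x y; split=> // _; apply: th_psi; exact: (proj2 (thN _ _) I).
move=> al be al_cong be_cong al_be_th.
have grow ga : rsub (restrA (join2 th ga)) psi -> is_cong ga -> rsub ga th.
  move=> join_psi ga_cong x y gaxy.
  have join_below : below_psi (join2 th ga) by split=> //; exact: cjoin_cong.
  by apply: (th_max _ join_below (cjoin_ub _ true)); exact: (cjoin_ub _ false).
have comm_joins : rsub (comm (restrA (join2 th al)) (restrA (join2 th be))) psi.
  move=> x y /comm_restr xy; apply: th_psi.
  exact: (comm_join2_sub commC commD th_cong al_cong be_cong al_be_th).
have [/grow ga_th | /grow ga_th] :=
  psi_pr _ _ (restr_cong (cjoin_cong _)) (restr_cong (cjoin_cong _)) comm_joins.
- by left; exact: ga_th.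
- by right; exact: ga_th.
Qed.

End MaximalBelow.

Theorem mainTheorem14 (S : signature) (B : algebra S) (P : B -> Prop)
    (HP : op_closed P) :
  @semiprime S B -> @semiprime S (subalg HP) ->
  @comm_commutative S B -> @comm_join_distributive S B ->
  @comm_commutative S (subalg HP) -> @comm_join_distributive S (subalg HP) ->
  @admissible S B P HP ->
  forall psi : rel_on (subalg HP), @is_min_prime S (subalg HP) psi ->
    exists mu : rel_on B, @is_min_prime S B mu /\ req (@restr S B P HP mu) psi.
Proof.
move=> _ _ commC commD _ _ adm psi [psi_prime psi_min].
have [th th_max] := exists_maximal_below_psi psi_prime.
have th_prime := maximal_below_psi_prime psi_prime commC commD th_max.
have [mu [mu_min mu_th]] := min_prime_below th_prime.
exists mu; split=> //.
apply: psi_min; first exact: adm (proj1 mu_min).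
by move=> x y /mu_th; exact: th_max.1.2.
Qed.
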